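(* For every fixed integer $k\ge1$, as formal power series in $y$, \[ \sum_{n\ge0}d^-_{n,k}y^n=\frac{y^{2k}(2-y)}{(1-y)^{k+1}}+y\,\delta_{k1}, \] where $\delta$ is the Kronecker delta.
   Context: For $n\ge1$ let $\Xi_n$ be the poset on $\{x_1,\dots,x_n\}$ whose cover relations are exactly: $x_2\prec x_1$, $x_3\prec x_2$, and for $3\le i\le n-1$, $x_i\prec x_{i+1}$ if $i$ is odd and $x_{i+1}\prec x_i$ if $i$ is even (so $x_1>x_2>x_3<x_4>x_5<\cdots$). A filter of a poset is an up-closed subset. $\Omega_n$ is the lattice of filters of $\Xi_n$ ordered by reverse inclusion; $\Omega_0$ is the one-element lattice. $d^-_{n,k}$ is the number of elements of $\Omega_n$ that are covered by exactly $k$ elements of $\Omega_n$ (equivalently, the number of $k$-element antichains of $\Xi_n$), and $d^-_{n,k}=0$ if there are none. *)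

From HB Require Import structures.
From mathcomp Require Import all_boot all_order all_algebra.
Set Implicit Arguments. Unset Strict Implicit. Unset Printing Implicit Defensive.
Import GRing.Theory.

(* Element i : 'I_n of Xi_n stands for x_(i+1).
   xi_cov a b (1-based labels) : x_a is covered by x_b (x_a ≺ x_b). *)
Definition xi_cov (a b : nat) : bool :=
  [|| (a == 2) && (b == 1),
      (a == 3) && (b == 2),
      [&& 3 <= a, odd a & b == a.+1]
    | [&& 4 <= b, ~~ odd b & a == b.+1] ].

Definition xi_le (n : nat) : rel 'I_n :=
  connect (fun x y : 'I_n => xi_cov x.+1 y.+1).

Definition is_filter (n : nat) (F : {set 'I_n}) : bool :=
  [forall x : 'I_n, forall y : 'I_n, (x \in F) && xi_le x y ==> (y \in F)].

(* In Omega_n (filters ordered by reverse inclusion), G covers F: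
   F < G (i.e. G is a proper subset of F) with no filter strictly between. *)
Definition omega_covers (n : nat) (F G : {set 'I_n}) : bool :=
  (G \proper F) &&
  ~~ [exists H : {set 'I_n}, [&& is_filter H, G \proper H & H \proper F]].

Definition dminus (n k : nat) : nat :=
  #|[set F : {set 'I_n} | is_filter F &&
       (#|[set G : {set 'I_n} | is_filter G && omega_covers F G]| == k)]|.

Definition dminus_trunc (k N : nat) : {poly int} :=
  \poly_(n < N.+1) (Posz (dminus n k)).

(* Covers of a filter F in the lattice of filters are the sets F minus one of its
   minimal elements, and a filter is determined by its antichain of minimal elements;
   hence d^-_{n,k} counts the k-antichains of Xi_n, i.e. the k-element stable sets of
   its comparability graph.  That graph is the triangle x_1 x_2 x_3 with the path
   x_3 x_4 ... x_n attached, so for n >= 4, splitting on whether x_n is used,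
   a_{n,k} = a_{n-1,k} + a_{n-2,k-1}.  With a_{n,0} = 1 this says
   (1 - y) A_k = y^2 A_{k-1} up to two boundary terms coming from the triangle, and the
   closed form follows by induction on k.  Series are handled through their truncations
   [take_poly (N + 1)], which are compatible with products. *)

From Pilot Require Import Defs.
From mathcomp Require Import all_boot all_order all_algebra zify ring.
Set Implicit Arguments. Unset Strict Implicit. Unset Printing Implicit Defensive.

Section FinitePoset.

Variables (T : finType) (le : rel T).
Hypotheses (le_refl : reflexive le) (le_trans : transitive le)
  (le_anti : antisymmetric le).

Definition up_closed (F : {set T}) : bool :=
  [forall x, forall y, (x \in F) && le x y ==> (y \in F)].

Definition lower_covers (F : {set T}) : {set {set T}} :=
  [set G | up_closed G && ((G \proper F) &&
     ~~ [exists H, [&& up_closed H, G \proper H & H \proper F]])].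

Definition minimals (F : {set T}) : {set T} :=
  [set x in F | [forall y in F, le y x ==> (y == x)]].

Definition upset (A : {set T}) : {set T} := [set y | [exists x in A, le x y]].

Definition antichain (A : {set T}) : bool :=
  [forall x in A, forall y in A, le x y ==> (x == y)].

Lemma up_closedP (F : {set T}) :
  reflect (forall x y, x \in F -> le x y -> y \in F) (up_closed F).
Proof.
apply: (iffP forallP) => [closedF x y Fx le_xy|closedF x].
  by have /forallP/(_ y) := closedF x; rewrite Fx le_xy.
by apply/forallP=> y; apply/implyP=> /andP[]; apply: closedF.
Qed.

Lemma minimalsP (F : {set T}) x :
  reflect (x \in F /\ forall y, y \in F -> le y x -> y = x) (x \in minimals F).
Proof.
rewrite inE; apply: (iffP andP) => [[Fx /forall_inP minx]|[Fx minx]].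
  by split=> // y Fy le_yx; apply/eqP/(implyP (minx y Fy)).
by split=> //; apply/forall_inP=> y Fy; apply/implyP=> /(minx y Fy)->.
Qed.

Lemma upsetP (A : {set T}) y : reflect (exists2 x, x \in A & le x y) (y \in upset A).
Proof. by rewrite inE; apply: (iffP exists_inP). Qed.

Lemma antichainP (A : {set T}) :
  reflect (forall x y, x \in A -> y \in A -> le x y -> x = y) (antichain A).
Proof.
apply: (iffP forall_inP) => [anti x y Ax Ay le_xy|anti x Ax].
  by have /forall_inP/(_ y Ay)/implyP/(_ le_xy)/eqP := anti x Ax.
by apply/forall_inP=> y Ay; apply/implyP=> /(anti x y Ax Ay)->.
Qed.

Definition rank (x : T) : nat := #|[set z | le z x]|.

Lemma rank_lt x y : le x y -> x != y -> rank x < rank y.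
Proof.
move=> le_xy neq_xy; apply: proper_card; apply/properP; split.
  by apply/subsetP=> z; rewrite !inE => /le_trans; apply.
exists y; rewrite !inE ?le_refl //; apply: contra neq_xy => le_yx.
by rewrite (@le_anti x y) ?le_xy.
Qed.

Lemma minimals_below (F : {set T}) y :
  y \in F -> exists2 x, x \in minimals F & le x y.
Proof.
move=> Fy; have Py : (y \in F) && le y y by rewrite Fy le_refl.
have [x /andP[Fx le_xy] minx] := @arg_minnP _ y (fun x => (x \in F) && le x y) rank Py.
exists x => //; apply/minimalsP; split=> // z Fz le_zx.
apply/eqP; apply: contraT => neq_zx.
have := minx z; rewrite Fz (le_trans le_zx le_xy) => /(_ isT).
by rewrite leqNgt rank_lt.
Qed.

Lemma setD1_lower_covers (F : {set T}) x :
  up_closed F -> x \in minimals F -> F :\ x \in lower_covers F.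
Proof.
move=> /up_closedP closedF /minimalsP[Fx minx]; rewrite inE; apply/and3P; split.
- apply/up_closedP=> z w; rewrite !inE => /andP[neq_zx Fz] le_zw.
  rewrite (closedF z w Fz le_zw) andbT; apply: contra neq_zx => /eqP eq_wx.
  by rewrite eq_wx in le_zw; rewrite (minx z Fz le_zw).
- exact: properD1.
- apply/existsPn=> H; apply/negP=> /and3P[_ ltxH ltHF].
  have := proper_card ltxH; have := proper_card ltHF.
  rewrite (cardsD1 x F) Fx; lia.
Qed.

Lemma lower_coversP (F G : {set T}) : up_closed F -> G \in lower_covers F ->
  exists2 x, x \in minimals F & G = F :\ x.
Proof.
move=> /up_closedP closedF; rewrite inE => /and3P[/up_closedP closedG ltGF /existsPn noH].
have [subGF [x0 Fx0 Gx0]] := properP ltGF.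
have FGx0 : x0 \in F :\: G by rewrite inE Gx0.
(* a rank-maximal element of F :\: G can be added to G keeping it closed *)
have [x] := @arg_maxnP _ x0 (mem (F :\: G)) rank FGx0.
rewrite /= inE => /andP[Gx Fx] maxx.
have closedxG : up_closed (x |: G).
  apply/up_closedP=> z w; rewrite !inE => /predU1P[->|Gz] le_zw; last first.
    by rewrite (closedG z w Gz le_zw) orbT.
  have [//|neq_wx] := eqVneq w x; case Gw: (w \in G); rewrite ?orbT //.
  have := maxx w; rewrite inE Gw (closedF x w Fx le_zw) => /(_ isT).
  by rewrite leqNgt rank_lt // eq_sym.
have xGF : x |: G = F.
  have : x |: G \subset F by rewrite subUset sub1set Fx subGF.
  case/eqVproper=> // ltxGF.
  by have := noH (x |: G); rewrite closedxG properUr ?sub1set // ltxGF.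
exists x; last by rewrite -xGF setU1K.
apply/minimalsP; split=> // y Fy le_yx; apply/eqP; apply: contraT => neq_yx.
case/negP: Gx; apply: closedG le_yx.
by move: Fy; rewrite -xGF !inE (negbTE neq_yx).
Qed.

Lemma lower_coversE (F : {set T}) : up_closed F ->
  lower_covers F = [set F :\ x | x in minimals F].
Proof.
move=> closedF; apply/setP=> G; apply/idP/imsetP => [/(lower_coversP closedF)//|].
by case=> x minx ->; apply: setD1_lower_covers.
Qed.

Lemma card_lower_covers (F : {set T}) :
  up_closed F -> #|lower_covers F| = #|minimals F|.
Proof.
move=> closedF; rewrite lower_coversE // card_in_imset // => x y.
move=> /minimalsP[Fx _] /minimalsP[Fy _] eqFxy; apply/eqP; apply: contraT => neq_xy.
by have := setD11 x F; rewrite eqFxy !inE neq_xy Fx.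
Qed.

Lemma up_closed_upset (A : {set T}) : up_closed (upset A).
Proof.
apply/up_closedP=> x y /upsetP[a Aa le_ax] le_xy; apply/upsetP.
by exists a => //; apply: le_trans le_xy.
Qed.

Lemma antichain_minimals (F : {set T}) : antichain (minimals F).
Proof. by apply/antichainP=> x y /minimalsP[Fx _] /minimalsP[_ miny]; apply: miny. Qed.

Lemma upset_minimals (F : {set T}) : up_closed F -> upset (minimals F) = F.
Proof.
move=> /up_closedP closedF; apply/setP=> y; apply/upsetP/idP.
  by case=> x /minimalsP[Fx _]; apply: closedF.
exact: minimals_below.
Qed.

Lemma minimals_upset (A : {set T}) : antichain A -> minimals (upset A) = A.
Proof.
move=> /antichainP antiA; apply/setP=> x; apply/minimalsP/idP.
  case=> /upsetP[a Aa le_ax] minx.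
  by rewrite -(minx a) //; apply/upsetP; exists a.
move=> Ax; split; first by apply/upsetP; exists x.
move=> y /upsetP[a Aa le_ay] le_yx; apply: le_anti; rewrite le_yx /=.
by rewrite -(antiA a x Aa Ax (le_trans le_ay le_yx)).
Qed.

Lemma card_up_closed_minimals (P : pred nat) :
  #|[set F | up_closed F && P #|minimals F|]| = #|[set A | antichain A && P #|A|]|.
Proof.
rewrite -(@card_in_imset _ _ minimals); last first.
  move=> F1 F2; rewrite !inE => /andP[closedF1 _] /andP[closedF2 _] eqF12.
  by rewrite -(upset_minimals closedF1) eqF12 upset_minimals.
apply: eq_card => A; rewrite inE; apply/imsetP/andP.
  by case=> F; rewrite inE => /andP[_ PF] ->; rewrite antichain_minimals.
case=> antiA PA; exists (upset A); last by rewrite minimals_upset.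
by rewrite inE up_closed_upset minimals_upset.
Qed.

End FinitePoset.

Definition xi_cov0 (x y : nat) : bool := xi_cov x.+1 y.+1.

(* Labels are 0-based, as in [Defs]: [i] stands for x_(i+1). *)
Lemma xi_cov0P x y :
  reflect [\/ x = 1 /\ y = 0, x = 2 /\ y = 1, [/\ 2 <= x, ~~ odd x & y = x.+1]
            | [/\ 3 <= y, odd y & x = y.+1]]
          (xi_cov0 x y).
Proof.
rewrite /xi_cov0 /xi_cov /= !ltnS negbK !eqSS.
apply: (iffP idP).
  case/or4P=> [/andP[/eqP-> /eqP->]|/andP[/eqP-> /eqP->]|/and3P[? ? /eqP->]|
               /and3P[? ? /eqP->]];
  by [apply: Or41|apply: Or42|apply: Or43|apply: Or44].
by case=> [[-> ->]|[-> ->]|[-> -> ->]|[-> -> ->]]; rewrite /= ?eqxx ?orbT.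
Qed.

Lemma xi_cov0_trans x y z : xi_cov0 x y -> xi_cov0 y z -> x = 2 /\ z = 0.
Proof.
move=> /xi_cov0P[[-> ->]|[-> ->]|[? par ->]|[? par ->]] /xi_cov0P[[]|[]|[]|[]] //=; lia.
Qed.

(* The only composite relation of Xi_n is x_3 < x_1, coming from x_3 < x_2 < x_1. *)
Definition xi_le0 (x y : nat) : bool :=
  [|| x == y, xi_cov0 x y | (x == 2) && (y == 0)].

Lemma xi_le0_cov0 x y z : xi_le0 x y -> xi_cov0 y z -> xi_le0 x z.
Proof.
case/or3P=> [/eqP->|cov_xy|/andP[/eqP-> /eqP->]] cov_yz; rewrite /xi_le0.
- by rewrite cov_yz orbT.
- by have [-> ->] := xi_cov0_trans cov_xy cov_yz; rewrite orbT.
- by case/xi_cov0P: cov_yz => [[]|[]|[]|[]].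
Qed.

Lemma xi_leE n (x y : 'I_n) : xi_le x y = xi_le0 x y.
Proof.
apply/idP/idP.
  case/connectP=> p + ->; have : xi_le0 x x by rewrite /xi_le0 eqxx.
  elim: p {2 3 5}x => [|z p IHp] w //= le_xw /andP[cov_wz path_zp].
  exact: IHp (xi_le0_cov0 le_xw cov_wz) path_zp.
case/or3P=> [/eqP/val_inj->|cov_xy|/andP[/eqP x2 /eqP y0]]; first exact: connect0.
  exact: connect1.
have lt1n : 1 < n by rewrite -x2 (leq_trans _ (ltn_ord x)).
apply: (connect_trans (y := Ordinal lt1n)); apply: connect1.
  by apply/xi_cov0P; rewrite x2; apply: Or42.
by apply/xi_cov0P; rewrite y0; apply: Or41.
Qed.

Lemma xi_le0_anti x y : xi_le0 x y -> xi_le0 y x -> x = y.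
Proof.
rewrite /xi_le0 => /or3P[/eqP//|/xi_cov0P cov_xy|/andP[/eqP x2 /eqP y0]]
  /or3P[/eqP//|/xi_cov0P cov_yx|/andP[/eqP y2 /eqP x0]].
- by case: cov_xy cov_yx => [[-> ->]|[-> ->]|[? ? ->]|[? ? ->]] [[]|[]|[]|[]] => *; lia.
- by case: cov_xy => [[]|[]|[]|[]]; lia.
- by case: cov_yx => [[]|[]|[]|[]]; lia.
- lia.
Qed.

Definition xi_adj (i j : nat) : bool :=
  (i != j) && [|| (i <= 2) && (j <= 2), j == i.+1 | i == j.+1].

Lemma xi_cov0_succ x : 2 <= x -> xi_cov0 x x.+1 || xi_cov0 x.+1 x.
Proof.
move=> le2x; have [odd_x|even_x] := boolP (odd x).
  by apply/orP; right; apply/xi_cov0P; apply: Or44; split=> //; case: x le2x odd_x => [|[|[|]]].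
by apply/orP; left; apply/xi_cov0P; apply: Or43.
Qed.

Lemma xi_le0_comparable x y :
  (xi_le0 x y || xi_le0 y x) = (x == y) || xi_adj x y.
Proof.
have [->|neq_xy] /= := eqVneq x y; first by rewrite /xi_le0 eqxx.
apply/idP/idP.
  rewrite /xi_adj neq_xy /xi_le0 [y == x]eq_sym (negbTE neq_xy) /=.
  by case/orP=> /orP[/xi_cov0P[[]|[]|[]|[]]|/andP[/eqP-> /eqP->]] //; lia.
rewrite /xi_adj neq_xy => /or3P[/andP[le_x2 le_y2]|/eqP->|/eqP->].
- by move: neq_xy le_x2 le_y2; case: x => [|[|[|x]]] //; case: y => [|[|[|y]]].
- have [|le2x] := leqP x 1; first by case: x {neq_xy} => [|[|]].
  by case/orP: (xi_cov0_succ le2x) => cov; rewrite /xi_le0 cov !orbT.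
- have [|le2y] := leqP y 1; first by case: y {neq_xy} => [|[|]].
  by case/orP: (xi_cov0_succ le2y) => cov; rewrite /xi_le0 cov !orbT.
Qed.

Lemma xi_le_refl n : reflexive (@xi_le n).
Proof. exact: connect0. Qed.

Lemma xi_le_trans n : transitive (@xi_le n).
Proof. exact: connect_trans. Qed.

Lemma xi_le_anti n : antisymmetric (@xi_le n).
Proof. by move=> x y; rewrite !xi_leE => /andP[le_xy le_yx]; apply/val_inj/xi_le0_anti. Qed.

Lemma xi_antichainE n (A : {set 'I_n}) :
  antichain (@xi_le n) A = [forall x in A, forall y in A, ~~ xi_adj x y].
Proof.
apply/antichainP/forall_inP => [anti x Ax|indep x y Ax Ay le_xy].
  apply/forall_inP=> y Ay; apply/negP=> adj_xy.
  have := xi_le0_comparable x y; rewrite adj_xy orbT -!xi_leE.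
  case/orP=> [/(anti x y Ax Ay)|/(anti y x Ay Ax)] eq_xy; move: adj_xy;
    by rewrite eq_xy /xi_adj eqxx.
apply/val_inj/eqP; apply: contraT => neq_xy.
have /forall_inP/(_ y Ay) := indep x Ax.
by rewrite -[xi_adj _ _]orFb -(negbTE neq_xy) -xi_le0_comparable -xi_leE le_xy.
Qed.

Lemma dminus_antichains n k :
  dminus n k =
  #|[set A : {set 'I_n} | [forall x in A, forall y in A, ~~ xi_adj x y] && (#|A| == k)]|.
Proof.
have [[refl trans] anti] := (@xi_le_refl n, @xi_le_trans n, @xi_le_anti n).
transitivity #|[set A : {set 'I_n} | antichain (@xi_le n) A && pred1 k #|A|]|; last first.
  by apply: eq_card => A; rewrite !inE xi_antichainE.
rewrite -(card_up_closed_minimals refl trans anti (pred1 k)).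
apply: eq_card => F; rewrite !inE.
have -> : is_filter F = up_closed (@xi_le n) F by [].
case closedF: (up_closed _ F) => //=.
by rewrite -(card_lower_covers refl trans anti closedF).
Qed.

Definition indicator n (A : {set 'I_n}) : bitseq := [seq x \in A | x <- enum 'I_n].

Lemma size_indicator n (A : {set 'I_n}) : size (indicator A) = n.
Proof. by rewrite size_map size_enum_ord. Qed.

Lemma nth_indicator n (A : {set 'I_n}) (x : 'I_n) : nth false (indicator A) x = (x \in A).
Proof. by rewrite (nth_map x) ?nth_ord_enum // size_enum_ord. Qed.

Lemma count_indicator n (A : {set 'I_n}) : count id (indicator A) = #|A|.
Proof. by rewrite count_map enumT cardE /enum_mem size_filter. Qed.

Fixpoint bitseqs (n : nat) : seq bitseq :=
  if n is m.+1
  then [seq rcons l true | l <- bitseqs m] ++ [seq rcons l false | l <- bitseqs m]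
  else [:: [::]].

Lemma mem_map_rcons (s : seq bitseq) l b c :
  (rcons l b \in [seq rcons l' c | l' <- s]) = (b == c) && (l \in s).
Proof.
apply/mapP/andP => [[l' sl' /rcons_inj[-> ->]]|[/eqP-> sl]]; last by exists l.
by rewrite eqxx.
Qed.

Lemma mem_bitseqs n l : (l \in bitseqs n) = (size l == n).
Proof.
elim: n l => [|n IHn] l; first by case: l.
case/lastP: l => [|l b] /=.
  by rewrite mem_cat; apply/negP=> /orP[] /mapP[[]].
by rewrite mem_cat !mem_map_rcons IHn size_rcons eqSS; case: b; rewrite ?orbF.
Qed.

Lemma uniq_bitseqs n : uniq (bitseqs n).
Proof.
elim: n => [|n IHn] //=.
rewrite cat_uniq !map_inj_uniq ?IHn ?andbT //=; try exact: rcons_injl.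
by apply/hasPn=> _ /mapP[l _ ->]; rewrite mem_map_rcons.
Qed.

Lemma card_indicator n (P : pred bitseq) :
  #|[set A : {set 'I_n} | P (indicator A)]| = count P (bitseqs n).
Proof.
rewrite cardsE cardE /enum_mem size_filter -enumT -(count_map (@indicator n)).
apply/permP/uniq_perm; rewrite ?uniq_bitseqs //.
  rewrite map_inj_uniq ?enum_uniq // => A B eqAB.
  by apply/setP=> x; rewrite -!nth_indicator eqAB.
move=> l; rewrite mem_bitseqs; apply/mapP/eqP=> [[A _ ->]|size_l]; first exact: size_indicator.
exists [set x : 'I_n | nth false l x]; first by rewrite mem_enum.
apply: (@eq_from_nth _ false); rewrite ?size_indicator // => i; rewrite size_l => lt_in.
by rewrite -[i]/(val (Ordinal lt_in)) nth_indicator inE.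
Qed.

Section StableSets.

Variable adj : rel nat.
Hypotheses (adj_sym : symmetric adj) (adj_irr : irreflexive adj).

Definition stable (l : bitseq) : bool :=
  all (fun i => nth false l i ==> all (fun j => nth false l j ==> ~~ adj i j) (iota 0 i))
      (iota 0 (size l)).

Lemma stableP l :
  reflect (forall i j, j < i < size l -> nth false l i -> nth false l j -> ~~ adj i j)
          (stable l).
Proof.
apply: (iffP allP) => [stab i j /andP[lt_ji lt_il] li lj|stab i].
  have := stab i; rewrite mem_iota lt_il li => /(_ isT)/allP/(_ j).
  by rewrite mem_iota lt_ji lj => /(_ isT).
rewrite mem_iota add0n => /= lt_il; apply/implyP=> li; apply/allP=> j.
rewrite mem_iota add0n => /= lt_ji; apply/implyP; apply: stab => //.
by rewrite lt_ji.
Qed.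

Lemma stable_indicator n (A : {set 'I_n}) :
  stable (indicator A) = [forall x in A, forall y in A, ~~ adj x y].
Proof.
apply/stableP/forall_inP => [stab x Ax|stab i j].
  apply/forall_inP=> y Ay; case: (ltngtP x y) => [lt_xy|lt_yx|/val_inj->].
  - by rewrite adj_sym; apply: stab; rewrite ?nth_indicator ?size_indicator ?lt_xy /=.
  - by apply: stab; rewrite ?nth_indicator ?size_indicator ?lt_yx /=.
  - by rewrite adj_irr.
rewrite size_indicator => /andP[lt_ji lt_in].
have lt_jn := ltn_trans lt_ji lt_in.
rewrite -[i]/(val (Ordinal lt_in)) -[j]/(val (Ordinal lt_jn)) !nth_indicator.
by move=> Ai Aj; have /forall_inP := stab _ Ai; apply.
Qed.

Lemma stable_rcons l b :
  stable (rcons l b) =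
  stable l && (b ==> all (fun j => nth false l j ==> ~~ adj (size l) j) (iota 0 (size l))).
Proof.
rewrite /stable size_rcons -addn1 iotaD all_cat /= add0n andbT nth_rcons ltnn eqxx.
congr (_ && (b ==> _)).
  apply: eq_in_all => i; rewrite mem_iota add0n nth_rcons => /= lt_il; rewrite lt_il.
  congr (_ ==> _); apply: eq_in_all => j; rewrite mem_iota add0n nth_rcons => /= lt_ji.
  by rewrite (ltn_trans lt_ji lt_il).
by apply: eq_in_all => j; rewrite mem_iota add0n nth_rcons => /= ->.
Qed.

End StableSets.

Lemma xi_adj_sym : symmetric xi_adj.
Proof. by move=> i j; rewrite /xi_adj; apply/idP/idP; lia. Qed.

Lemma xi_adj_irr : irreflexive xi_adj.
Proof. by move=> i; rewrite /xi_adj eqxx. Qed.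

Lemma xi_adj_last i j : 3 <= i -> j < i -> xi_adj i j = (j == i.-1).
Proof. by move=> le3i lt_ji; rewrite /xi_adj; apply/idP/eqP; lia. Qed.

Definition n_antichains (n k : nat) : nat :=
  count (fun l => stable xi_adj l && (count id l == k)) (bitseqs n).

Lemma dminus_n_antichains n k : dminus n k = n_antichains n k.
Proof.
rewrite dminus_antichains /n_antichains -card_indicator.
by apply: eq_card => A; rewrite !inE stable_indicator ?count_indicator //;
  [exact: xi_adj_sym|exact: xi_adj_irr].
Qed.

Lemma count_rcons (l : bitseq) b : count id (rcons l b) = count id l + b.
Proof. by rewrite -cats1 count_cat /= addn0. Qed.

(* From x_4 on, a new element is comparable only with its predecessor. *)
Lemma xi_stable_rcons2 l b c : 2 <= size l ->
  stable xi_adj (rcons (rcons l b) c) = stable xi_adj (rcons l b) && ~~ (b && c).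
Proof.
move=> le2l; rewrite (stable_rcons _ (rcons l b)) size_rcons -addn1 iotaD all_cat add0n.
rewrite [iota _ 1]/= all_seq1 nth_rcons ltnn eqxx xi_adj_last ?addn1 // eqxx.
rewrite (@eq_in_all _ _ predT) ?all_predT; last first.
  move=> j; rewrite mem_iota add0n => /andP[_ lt_jl].
  by rewrite xi_adj_last ?(ltn_trans lt_jl) //= ltn_eqF ?implybT.
by case: b c => [] [].
Qed.

Lemma n_antichains0 n : n_antichains n 0 = 1.
Proof.
elim: n => // n IHn; rewrite /n_antichains /= count_cat !count_map.
rewrite (@eq_count _ _ pred0) ?count_pred0 => [|l]; last first.
  by rewrite /= count_rcons addn1 andbF.
rewrite -IHn; apply: eq_count => l /=.
by rewrite stable_rcons count_rcons addn0 andbT.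
Qed.

Lemma n_antichains_rec n k : 2 <= n ->
  n_antichains n.+2 k.+1 = n_antichains n.+1 k.+1 + n_antichains n k.
Proof.
move=> le2n; rewrite /n_antichains [bitseqs n.+2]/= count_cat !count_map addnC.
congr (_ + _).
  by apply: eq_count => l /=; rewrite stable_rcons count_rcons addn0 andbT.
rewrite count_cat !count_map (@eq_in_count _ _ pred0); last first.
  move=> l; rewrite mem_bitseqs => /eqP size_l /=.
  by rewrite xi_stable_rcons2 ?size_l ?andbF.
rewrite count_pred0 add0n; apply: eq_in_count => l; rewrite mem_bitseqs => /eqP size_l /=.
rewrite xi_stable_rcons2 ?size_l // stable_rcons !count_rcons addn0 addn1 eqSS /=.
by rewrite !andbT.
Qed.

Import GRing.Theory.
Local Open Scope ring_scope.

Section TakePoly.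

Variables (R : nzRingType) (m : nat).

Lemma take_polyP (p q : {poly R}) :
  take_poly m p = take_poly m q <-> (forall i, (i < m)%N -> p`_i = q`_i).
Proof.
split=> [eq_pq i lt_im|eq_pq].
  by have := congr1 (fun r : {poly R} => r`_i) eq_pq; rewrite /= !coef_take_poly lt_im.
by apply/polyP=> i; rewrite !coef_take_poly; case: ifP => // /eq_pq.
Qed.

Lemma take_poly_mull (p p' q : {poly R}) :
  take_poly m p = take_poly m p' -> take_poly m (p * q) = take_poly m (p' * q).
Proof.
move=> /take_polyP eq_p; apply/take_polyP=> i lt_im; rewrite !coefM.
by apply: eq_bigr => j _; rewrite eq_p // (leq_ltn_trans _ lt_im) // -ltnS.
Qed.

Lemma take_poly_mulr (p q q' : {poly R}) :
  take_poly m q = take_poly m q' -> take_poly m (p * q) = take_poly m (p * q').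
Proof.
move=> /take_polyP eq_q; apply/take_polyP=> i lt_im; rewrite !coefM.
by apply: eq_bigr => j _; rewrite eq_q // (leq_ltn_trans _ lt_im) // leq_subr.
Qed.

End TakePoly.

Lemma coef_dminus_trunc k N i :
  (i <= N)%N -> (dminus_trunc k N)`_i = (n_antichains i k)%:Z.
Proof. by move=> le_iN; rewrite coef_poly ltnS le_iN dminus_n_antichains. Qed.

Lemma take_dminus_trunc0 N :
  take_poly N.+1 (dminus_trunc 0 N * (1 - 'X)) = take_poly N.+1 1.
Proof.
apply/take_polyP=> i; rewrite ltnS => le_iN.
rewrite mulrBr mulr1 coefB coefMX coef1 coef_dminus_trunc // n_antichains0.
case: i le_iN => [//|i] le_iN.
by rewrite coef_dminus_trunc ?n_antichains0 ?subrr // ltnW.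
Qed.

(* Corrections to the recurrence coming from the chain x_3 < x_2 < x_1. *)
Definition rec_correction (k : nat) : {poly int} :=
  if k == 1%N then 'X else if k == 2%N then - 'X^3 else 0.

Lemma take_dminus_truncS k N :
  take_poly N.+1 (dminus_trunc k.+1 N * (1 - 'X)) =
  take_poly N.+1 ('X^2 * dminus_trunc k N + rec_correction k.+1).
Proof.
apply/take_polyP=> i; rewrite ltnS => le_iN.
rewrite mulrBr mulr1 coefB coefMX coefD coefXnM coef_dminus_trunc //.
case: i le_iN => [|[|[|[|i]]]] le_iN /=.
1-4: by case: k => [|[|[|k]]];
  rewrite /rec_correction /= ?coefX ?coefN ?coefXn ?coef0 ?coef_dminus_trunc //; lia.
have -> : (rec_correction k.+1)`_i.+4 = 0.
  by rewrite /rec_correction; case: ifP => _; [|case: ifP => _];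
    rewrite ?coefX ?coefN ?coefXn ?coef0 ?oppr0.
rewrite addr0 !coef_dminus_trunc ?(leq_trans _ le_iN) ?leq_subr //.
by rewrite n_antichains_rec // PoszD addrAC subrr add0r.
Qed.

(* (1 - y)^(k+1) times the generating function; for k = 0 the latter is 1 / (1 - y). *)
Definition gf_numerator (k : nat) : {poly int} :=
  if k is 0 then 1
  else 'X ^+ (2 * k) * (2%:R - 'X) + (k == 1%N)%:R *: ('X * (1 - 'X) ^+ k.+1).

Lemma gf_numeratorS k :
  'X^2 * gf_numerator k + rec_correction k.+1 * (1 - 'X) ^+ k.+1 = gf_numerator k.+1.
Proof.
case: k => [|[|k]]; rewrite /gf_numerator /rec_correction /=.
- by rewrite scale1r; ring.
- by rewrite scale1r scale0r; ring.
- by rewrite !scale0r mul0r !addr0 mulrA -exprD [(2 * k.+3)%N]mulnS.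
Qed.

Lemma take_dminus_trunc k N :
  take_poly N.+1 (dminus_trunc k N * (1 - 'X) ^+ k.+1) = take_poly N.+1 (gf_numerator k).
Proof.
elim: k => [|k IHk]; first by rewrite expr1 take_dminus_trunc0.
rewrite exprS mulrA -gf_numeratorS (take_poly_mull _ (take_dminus_truncS k N)).
by rewrite mulrDl -mulrA !take_polyD (take_poly_mulr _ IHk).
Qed.

Theorem mainTheorem20 (k : nat) (hk : (1 <= k)%N) :
  forall N : nat,
    (dminus_trunc k N * (1 - 'X) ^+ k.+1)`_N =
    ('X ^+ (2 * k) * (2%:R - 'X) + (k == 1%N)%:R *: ('X * (1 - 'X) ^+ k.+1))`_N.
Proof.
move=> N; case: k hk => [//|k] _.
by have /take_polyP-> := take_dminus_trunc k.+1 N.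
Qed.
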